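(* Let $A$ be a category with a variance $(E,M)$, let $C$ be a category, let $F\colon A\rightarrow C$ be a functor of variance $(E,M)$, and let $(R,L)$ be a span on $A$. Assume that the products $\prod_{x} F(Lx)$ (over the objects $x$ of $R$) and $\prod_{f} F(L(f)_t)$ (over the morphisms $f$ of $R$) exist in $C$. Let $s,t\colon \prod_x F(Lx)\rightarrow \prod_f F(L(f)_t)$ be the unique morphisms such that for every morphism $f\colon x\rightarrow y$ of $R$, $$\pi_f\circ s = F(L(f)^e)\circ \pi_x,\qquad \pi_f\circ t = F(L(f)^m)\circ\pi_y .$$ Then the assignment sending an $L$-wedge $(c,(\eta_x)_x)$ to $(c,\eta')$, where $\eta'\colon c\rightarrow \prod_x F(Lx)$ is the morphism with components $\eta_x$ (and acting as the identity on underlying morphisms), is an isomorphism between the category of $L$-wedges of $F$ and the category of cones equalizing $s$ and $t$ (pairs $(c,e\colon c\rightarrow\prod_xF(Lx))$ with $se=te$, morphisms being morphisms $c\rightarrow d$ in $C$ commuting with the maps $e$). In particular, the end $\int_L F$ exists if and only if the equalizer of $s$ and $t$ exists, and in that case they agree.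
   Context: A variance on a category $A$ is a pair $(E,M)$ of subcategories containing all objects such that every morphism $f$ factors uniquely as $f=me$ and uniquely as $f=e'm'$ with $e,e'$ in $E$ and $m,m'$ in $M$. For $f\colon x\rightarrow y$ write $f=f^mf^e$ with $f^e\colon x\rightarrow f_t$ in $E$, $f^m\colon f_t\rightarrow y$ in $M$, and $f=f_ef_m$ with $f_m\colon x\rightarrow f_s$ in $M$, $f_e\colon f_s\rightarrow y$ in $E$. A functor $F\colon A\rightarrow C$ of variance $(E,M)$ assigns objects to objects and to each morphism $f$ of $A$ a morphism $F(f)\colon F(f_s)\rightarrow F(f_t)$, preserving identities and satisfying, for composable $x\xrightarrow{f}y\xrightarrow{g}z$, $F(gf)=F((g^ef^m)^e)F(f)F((g_mf_e)_m)=F((g^ef^m)^m)F(g)F((g_mf_e)_e)$. (Thus for $f\colon x\rightarrow y$ in $R$, $F(L(f)^e)\colon F(Lx)\rightarrow F(L(f)_t)$ and $F(L(f)^m)\colon F(Ly)\rightarrow F(L(f)_t)$.) A span on $A$ is a pair $(R,L)$ of a category $R$ and a functor $L\colon R\rightarrow A$. An $L$-wedge of $F$ is a pair $(c,\eta)$ where $c$ is an object of $C$ and $\eta=(\eta_x\colon c\rightarrow F(Lx))_{x\in R}$ is a family such that $F(L(f)^e)\circ\eta_x = F(L(f)^m)\circ\eta_y$ for every morphism $f\colon x\rightarrow y$ of $R$. A morphism of $L$-wedges $(c,\eta)\rightarrow(d,\theta)$ is a morphism $h\colon c\rightarrow d$ with $\theta_x\circ h=\eta_x$ for all objects $x$ of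 $R$; composition is that of $C$. The end $\int_L F$ of $F$ over $L$ is a terminal $L$-wedge. *)

From Stdlib Require Import ProofIrrelevance.

Set Implicit Arguments.
Unset Strict Implicit.

Record Category := {
  Ob :> Type;
  Hom : Ob -> Ob -> Type;
  idm : forall x, Hom x x;
  comp : forall x y z, Hom y z -> Hom x y -> Hom x z;
  comp_id_l : forall x y (f : Hom x y), comp (idm y) f = f;
  comp_id_r : forall x y (f : Hom x y), comp f (idm x) = f;
  comp_assoc : forall x y z w (f : Hom x y) (g : Hom y z) (h : Hom z w),
      comp h (comp g f) = comp (comp h g) f
}.
Arguments Hom {c} _ _.
Arguments idm {c} _.
Arguments comp {c x y z} _ _.
Notation "g ∘ f" := (comp g f) (at level 40, left associativity).

(** Morphisms packed with their endpoints; [HEq f g] says that [f] and [g]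
    are the same morphism (in particular their endpoints agree).  This is used
    to compare morphisms whose endpoints are only propositionally equal. *)
Definition AllHom (C : Category) := {p : Ob C * Ob C & Hom (fst p) (snd p)}.
Definition homT {C : Category} {a b : C} (f : Hom a b) : AllHom C :=
  existT (fun p : Ob C * Ob C => Hom (fst p) (snd p)) (a, b) f.
Definition HEq {C : Category} {a b a' b' : C} (f : Hom a b) (g : Hom a' b') : Prop :=
  homT f = homT g.

Record Functor (C D : Category) := {
  fob :> Ob C -> Ob D;
  fmor : forall x y, @Hom C x y -> @Hom D (fob x) (fob y);
  fmor_id : forall x, fmor (idm x) = idm (fob x);
  fmor_comp : forall x y z (f : @Hom C x y) (g : @Hom C y z),
      fmor (g ∘ f) = fmor g ∘ fmor f
}.
Arguments fmor {C D} _ {x y} _.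

Definition IsIsoFunctor {C D : Category} (Phi : Functor C D) : Prop :=
  exists Psi : Functor D C,
    (forall x : C, Psi (Phi x) = x) /\
    (forall y : D, Phi (Psi y) = y) /\
    (forall (x x' : C) (f : Hom x x'), HEq (fmor Psi (fmor Phi f)) f) /\
    (forall (y y' : D) (g : Hom y y'), HEq (fmor Phi (fmor Psi g)) g).

Definition IsTerminal (C : Category) (t : C) : Prop :=
  forall x : C, exists! h : Hom x t, True.

Definition IsProduct {C : Category} {I : Type} {X : I -> Ob C} {P : C}
  (pi : forall i, Hom P (X i)) : Prop :=
  forall (c : C) (f : forall i, Hom c (X i)),
    exists! h : Hom c P, forall i, pi i ∘ h = f i.

Definition IsEqualizer {C : Category} {a b : C} (s t : Hom a b) {c : C}
  (e : Hom c a) : Prop :=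
  s ∘ e = t ∘ e /\
  forall (d : C) (e' : Hom d a), s ∘ e' = t ∘ e' ->
    exists! h : Hom d c, e ∘ h = e'.

(* A variance (E,M) on A: two wide subcategories (predicates on morphisms
   containing identities and closed under composition) such that every f
   factors uniquely as f = f^m f^e and uniquely as f = f_e f_m (e's in E,
   m's in M).  The (unique) factorizations are recorded as data:
     f^e : x -> f_t,  f^m : f_t -> y,   f_m : x -> f_s,  f_e : f_s -> y. *)
Record Variance (A : Category) := {
  vE : forall x y : A, Hom x y -> Prop;
  vM : forall x y : A, Hom x y -> Prop;
  vE_id : forall x : A, vE (idm x);
  vE_comp : forall (x y z : A) (f : Hom x y) (g : Hom y z),
      vE f -> vE g -> vE (g ∘ f);
  vM_id : forall x : A, vM (idm x);
  vM_comp : forall (x y z : A) (f : Hom x y) (g : Hom y z),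
      vM f -> vM g -> vM (g ∘ f);
  vt : forall x y : A, Hom x y -> A;
  up_e : forall (x y : A) (f : Hom x y), Hom x (vt f);
  up_m : forall (x y : A) (f : Hom x y), Hom (vt f) y;
  up_e_E : forall (x y : A) (f : Hom x y), vE (up_e f);
  up_m_M : forall (x y : A) (f : Hom x y), vM (up_m f);
  up_fact : forall (x y : A) (f : Hom x y), up_m f ∘ up_e f = f;
  up_unique : forall (x y z : A) (f : Hom x y) (e : Hom x z) (m : Hom z y),
      vE e -> vM m -> m ∘ e = f ->
      existT (fun w => (Hom x w * Hom w y)%type) z (e, m)
      = existT (fun w => (Hom x w * Hom w y)%type) (vt f) (up_e f, up_m f);
  vs : forall x y : A, Hom x y -> A;
  lo_m : forall (x y : A) (f : Hom x y), Hom x (vs f);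
  lo_e : forall (x y : A) (f : Hom x y), Hom (vs f) y;
  lo_m_M : forall (x y : A) (f : Hom x y), vM (lo_m f);
  lo_e_E : forall (x y : A) (f : Hom x y), vE (lo_e f);
  lo_fact : forall (x y : A) (f : Hom x y), lo_e f ∘ lo_m f = f;
  lo_unique : forall (x y z : A) (f : Hom x y) (m : Hom x z) (e : Hom z y),
      vM m -> vE e -> e ∘ m = f ->
      existT (fun w => (Hom x w * Hom w y)%type) z (m, e)
      = existT (fun w => (Hom x w * Hom w y)%type) (vs f) (lo_m f, lo_e f)
}.
Arguments vE {A} _ {x y} _.
Arguments vM {A} _ {x y} _.
Arguments vt {A} _ {x y} _.
Arguments up_e {A} _ {x y} _.
Arguments up_m {A} _ {x y} _.
Arguments vs {A} _ {x y} _.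
Arguments lo_m {A} _ {x y} _.
Arguments lo_e {A} _ {x y} _.

(* Identities are preserved, and for x -f-> y -g-> z
     F(gf) = F((g^e f^m)^e) F(f) F((g_m f_e)_m)
           = F((g^e f^m)^m) F(g) F((g_m f_e)_e),
   where the composites are taken along the canonical identifications of
   endpoints (expressed with HEq). *)
Record VFunctor (A : Category) (V : Variance A) (C : Category) := {
  vfob :> Ob A -> Ob C;
  vfmor : forall (x y : A) (f : Hom x y), @Hom C (vfob (vs V f)) (vfob (vt V f));
  vfmor_id : forall x : A, HEq (vfmor (idm x)) (idm (vfob x));
  vfmor_comp1 : forall (x y z : A) (f : Hom x y) (g : Hom y z),
      exists (a b c d : C) (u : Hom a b) (v : Hom b c) (w : Hom c d),
        HEq u (vfmor (lo_m V (lo_m V g ∘ lo_e V f))) /\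
        HEq v (vfmor f) /\
        HEq w (vfmor (up_e V (up_e V g ∘ up_m V f))) /\
        HEq (vfmor (g ∘ f)) (w ∘ v ∘ u);
  vfmor_comp2 : forall (x y z : A) (f : Hom x y) (g : Hom y z),
      exists (a b c d : C) (u : Hom a b) (v : Hom b c) (w : Hom c d),
        HEq u (vfmor (lo_e V (lo_m V g ∘ lo_e V f))) /\
        HEq v (vfmor g) /\
        HEq w (vfmor (up_m V (up_e V g ∘ up_m V f))) /\
        HEq (vfmor (g ∘ f)) (w ∘ v ∘ u)
}.
Arguments vfmor {A V C} _ {x y} _.

Record Span (A : Category) := { SR : Category; SL : Functor SR A }.
Arguments SR {A} _.
Arguments SL {A} _.

Definition MorIdx (R : Category) := AllHom R.

Section Wedges.
Context {A : Category} {V : Variance A} {C : Category} (F : VFunctor V C)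
        (S : Span A).

Local Notation R := (SR S).
Local Notation L := (SL S).

Definition IsWedge (c : C) (eta : forall x : R, Hom c (F (L x))) : Prop :=
  forall (x y : R) (f : Hom x y),
    exists (b : C) (u : Hom (F (L x)) b) (v : Hom (F (L y)) b),
      HEq u (vfmor F (up_e V (fmor L f))) /\
      HEq v (vfmor F (up_m V (fmor L f))) /\
      u ∘ eta x = v ∘ eta y.

Definition WObj := {c : C & {eta : forall x : R, Hom c (F (L x)) | IsWedge eta}}.
Definition wob (w : WObj) : C := projT1 w.
Definition weta (w : WObj) : forall x : R, Hom (wob w) (F (L x)) :=
  proj1_sig (projT2 w).
Definition WHom (w w' : WObj) :=
  {h : Hom (wob w) (wob w') | forall x : R, weta w' x ∘ h = weta w x}.

Lemma WHom_eq (w w' : WObj) (h k : WHom w w') :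
  proj1_sig h = proj1_sig k -> h = k.
Proof.
  destruct h as [h ph], k as [k pk]; simpl; intros ->.
  f_equal; apply proof_irrelevance.
Qed.

Definition WId (w : WObj) : WHom w w.
Proof.
  exists (idm _). intros x. apply comp_id_r.
Defined.

Definition WComp (w1 w2 w3 : WObj) (g : WHom w2 w3) (f : WHom w1 w2) :
  WHom w1 w3.
Proof.
  exists (proj1_sig g ∘ proj1_sig f). intros x.
  rewrite comp_assoc, (proj2_sig g), (proj2_sig f). reflexivity.
Defined.

Definition WedgeCat : Category.
Proof.
  refine {| Ob := WObj; Hom := WHom; idm := WId; comp := WComp |}.
  - intros; apply WHom_eq; simpl; apply comp_id_l.
  - intros; apply WHom_eq; simpl; apply comp_id_r.
  - intros; apply WHom_eq; simpl; apply comp_assoc.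
Defined.

Definition IsEnd (w : WedgeCat) : Prop := IsTerminal w.

End Wedges.

Section Cones.
Context {C : Category} {a b : C} (s t : Hom a b).

Definition CObj := {c : C & {e : Hom c a | s ∘ e = t ∘ e}}.
Definition cob (k : CObj) : C := projT1 k.
Definition cmor (k : CObj) : Hom (cob k) a := proj1_sig (projT2 k).
Definition CHom (k k' : CObj) :=
  {h : Hom (cob k) (cob k') | cmor k' ∘ h = cmor k}.

Lemma CHom_eq (k k' : CObj) (h h' : CHom k k') :
  proj1_sig h = proj1_sig h' -> h = h'.
Proof.
  destruct h as [h ph], h' as [h' ph']; simpl; intros ->.
  f_equal; apply proof_irrelevance.
Qed.

Definition CId (k : CObj) : CHom k k.
Proof. exists (idm _). apply comp_id_r. Defined.

Definition CComp (k1 k2 k3 : CObj) (g : CHom k2 k3) (f : CHom k1 k2) :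
  CHom k1 k3.
Proof.
  exists (proj1_sig g ∘ proj1_sig f).
  rewrite comp_assoc, (proj2_sig g), (proj2_sig f). reflexivity.
Defined.

Definition ConeCat : Category.
Proof.
  refine {| Ob := CObj; Hom := CHom; idm := CId; comp := CComp |}.
  - intros; apply CHom_eq; simpl; apply comp_id_l.
  - intros; apply CHom_eq; simpl; apply comp_id_r.
  - intros; apply CHom_eq; simpl; apply comp_assoc.
Defined.

End Cones.

(* A family (eta_x : c -> F(Lx))_x is the same thing as a single map
   eta' : c -> prod_x F(Lx).  Projecting s eta' and t eta' to the factor of a
   morphism f : x -> y of R gives F(L(f)^e) eta_x and F(L(f)^m) eta_y, so by
   joint monicity of the projections eta is a wedge iff s eta' = t eta'.  In
   the same way a map h : c -> d commutes with the legs eta of wedges iff it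
   commutes with the legs eta' of cones.  Hence wedges and equalizing cones
   form isomorphic categories, and a terminal equalizing cone is exactly an
   equalizer of s and t. *)
From Stdlib Require Import ProofIrrelevance FunctionalExtensionality
  ClassicalEpsilon Eqdep.
Set Implicit Arguments.

Lemma HEq_eq {C : Category} {a b : C} (f g : Hom a b) : HEq f g -> f = g.
Proof. exact (EqdepTheory.inj_pair2 _ _ _ _ _). Qed.

Lemma HEq_comp_eq {C : Category} {a a' b b' c : C}
  (u : Hom a b) (v : Hom a' b) (u' : Hom a b') (v' : Hom a' b')
  (k : Hom c a) (k' : Hom c a') :
  HEq u u' -> HEq v v' -> u' ∘ k = v' ∘ k' -> u ∘ k = v ∘ k'.
Proof.
  intros Hu Hv.
  assert (b = b') as <- by exact (f_equal (fun p => snd (projT1 p)) Hu).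
  now rewrite (HEq_eq Hu), (HEq_eq Hv).
Qed.

Section Products.
Context {C : Category} {I : Type} {X : I -> Ob C} {P : C}
  (pi : forall i, Hom P (X i)) (HP : IsProduct pi).

Definition tuple {c : C} (f : forall i, Hom c (X i)) : Hom c P :=
  proj1_sig (constructive_indefinite_description _
    (let (h, Hh) := HP c f in ex_intro _ h (proj1 Hh))).

Lemma tuple_proj {c : C} (f : forall i, Hom c (X i)) (i : I) :
  pi i ∘ tuple f = f i.
Proof. unfold tuple. destruct constructive_indefinite_description as [h Hh]. apply Hh. Qed.

Lemma product_ext {c : C} (h h' : Hom c P) :
  (forall i, pi i ∘ h = pi i ∘ h') -> h = h'.
Proof.
  intros E. destruct (HP _ (fun i => pi i ∘ h')) as [k [_ Uk]].
  now rewrite <- (Uk h E), <- (Uk h').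
Qed.

End Products.

Section FullyFaithful.
Context {C D : Category} (Phi : Functor C D).
Hypothesis Phi_faithful :
  forall (x x' : C) (f f' : Hom x x'), fmor Phi f = fmor Phi f' -> f = f'.
Hypothesis Phi_full :
  forall (x x' : C) (g : Hom (Phi x) (Phi x')), exists f, fmor Phi f = g.
Hypothesis Phi_surjective : forall y : D, exists x, Phi x = y.

Lemma terminal_fully_faithful (w : C) : IsTerminal w <-> IsTerminal (Phi w).
Proof.
  split.
  - intros Hw y. destruct (Phi_surjective y) as [x <-].
    destruct (Hw x) as [h [_ Uh]].
    exists (fmor Phi h). split; [trivial|].
    intros g _. destruct (Phi_full _ _ g) as [f <-]. now rewrite (Uh f I).
  - intros Hw x. destruct (Hw (Phi x)) as [g [_ Ug]].
    destruct (Phi_full _ _ g) as [h <-].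
    exists h. split; [trivial|].
    intros h' _. apply Phi_faithful. now apply Ug.
Qed.

End FullyFaithful.

Lemma cone_terminal_iff_equalizer (C : Category) (a b : C) (s t : Hom a b)
  (k : ConeCat s t) : IsTerminal k <-> IsEqualizer s t (cmor k).
Proof.
  split.
  - intros Hk. split; [exact (proj2_sig (projT2 k))|].
    intros d e' He'.
    destruct (Hk (existT _ d (exist _ e' He'))) as [h [_ Uh]].
    exists (proj1_sig h). split; [exact (proj2_sig h)|].
    intros h' Eh'. exact (f_equal (@proj1_sig _ _) (Uh (exist _ h' Eh') I)).
  - intros [_ U] k'.
    destruct (U _ (cmor k') (proj2_sig (projT2 k'))) as [h [Eh Uh]].
    exists (exist _ h Eh). split; [trivial|].
    intros g _. apply CHom_eq. exact (Uh _ (proj2_sig g)).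
Qed.

Lemma WHom_HEq (A : Category) (V : Variance A) (C : Category)
  (F : VFunctor V C) (S : Span A) (w1 w1' w2 w2' : WedgeCat F S)
  (g : Hom w1 w1') (f : Hom w2 w2') :
  w1 = w2 -> w1' = w2' -> HEq (proj1_sig g) (proj1_sig f) -> HEq g f.
Proof.
  intros <- <- H. unfold HEq. f_equal. apply WHom_eq. exact (HEq_eq H).
Qed.

Lemma CHom_HEq (C : Category) (a b : C) (s t : Hom a b)
  (k1 k1' k2 k2' : ConeCat s t) (g : Hom k1 k1') (f : Hom k2 k2') :
  k1 = k2 -> k1' = k2' -> HEq (proj1_sig g) (proj1_sig f) -> HEq g f.
Proof.
  intros <- <- H. unfold HEq. f_equal. apply CHom_eq. exact (HEq_eq H).
Qed.

Section WedgesAsCones.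
Context {A : Category} {V : Variance A} {C : Category} (F : VFunctor V C)
  (S : Span A).
Variables (P1 : C) (pi1 : forall x : SR S, Hom P1 (F (SL S x))).
Hypothesis HP1 : IsProduct pi1.
Variables (P2 : C)
  (pi2 : forall i : MorIdx (SR S), Hom P2 (F (vt V (fmor (SL S) (projT2 i))))).
Hypothesis HP2 : IsProduct pi2.
Variables s t : Hom P1 P2.
Hypothesis Hs : forall (x y : SR S) (f : Hom x y),
  exists u : Hom (F (SL S x)) (F (vt V (fmor (SL S) f))),
    HEq u (vfmor F (up_e V (fmor (SL S) f))) /\ pi2 (homT f) ∘ s = u ∘ pi1 x.
Hypothesis Ht : forall (x y : SR S) (f : Hom x y),
  exists v : Hom (F (SL S y)) (F (vt V (fmor (SL S) f))),
    HEq v (vfmor F (up_m V (fmor (SL S) f))) /\ pi2 (homT f) ∘ t = v ∘ pi1 y.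

Lemma wedge_iff_equalizes {c : C} (e : Hom c P1) :
  IsWedge (fun x => pi1 x ∘ e) <-> s ∘ e = t ∘ e.
Proof.
  split.
  - intros W. apply (product_ext HP2). intros [[x y] f]. simpl in f.
    change (pi2 (homT f) ∘ (s ∘ e) = pi2 (homT f) ∘ (t ∘ e)).
    destruct (Hs _ _ f) as [u [Hu Eu]], (Ht _ _ f) as [v [Hv Ev]].
    destruct (W x y f) as [b [u' [v' [Hu' [Hv' E]]]]].
    rewrite !comp_assoc, Eu, Ev, <- !comp_assoc.
    eapply HEq_comp_eq; [exact (eq_trans Hu (eq_sym Hu'))
                       | exact (eq_trans Hv (eq_sym Hv')) | exact E].
  - intros E x y f.
    destruct (Hs _ _ f) as [u [Hu Eu]], (Ht _ _ f) as [v [Hv Ev]].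
    exists _, u, v. split; [exact Hu|]. split; [exact Hv|].
    now rewrite !comp_assoc, <- Eu, <- Ev, <- !comp_assoc, E.
Qed.

Lemma tuple_weta (w : WedgeCat F S) : (fun x => pi1 x ∘ tuple HP1 (weta w)) = weta w.
Proof. apply functional_extensionality_dep. exact (tuple_proj HP1 (weta w)). Qed.

Lemma tuple_weta_equalizes (w : WedgeCat F S) :
  s ∘ tuple HP1 (weta w) = t ∘ tuple HP1 (weta w).
Proof.
  apply wedge_iff_equalizes. rewrite tuple_weta. exact (proj2_sig (projT2 w)).
Qed.

Definition wedge_cone (w : WedgeCat F S) : ConeCat s t :=
  existT _ (wob w) (exist _ (tuple HP1 (weta w)) (tuple_weta_equalizes w)).

Definition cone_wedge (k : ConeCat s t) : WedgeCat F S :=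
  existT _ (cob k) (exist _ (fun x => pi1 x ∘ cmor k)
    (proj2 (wedge_iff_equalizes (cmor k)) (proj2_sig (projT2 k)))).

Lemma wedge_hom_iff (w w' : WedgeCat F S) (h : Hom (wob w) (wob w')) :
  (forall x, weta w' x ∘ h = weta w x) <->
  tuple HP1 (weta w') ∘ h = tuple HP1 (weta w).
Proof.
  split.
  - intros E. apply (product_ext HP1). intros x.
    rewrite comp_assoc, !(tuple_proj HP1). exact (E x).
  - intros E x. rewrite <- (tuple_proj HP1 (weta w') x), <- comp_assoc, E.
    apply (tuple_proj HP1).
Qed.

Definition wedge_cone_mor (w w' : WedgeCat F S) (h : Hom w w') :
  Hom (wedge_cone w) (wedge_cone w') :=
  exist _ (proj1_sig h) (proj1 (wedge_hom_iff w w' _) (proj2_sig h)).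

Definition cone_wedge_mor (k k' : ConeCat s t) (h : Hom k k') :
  Hom (cone_wedge k) (cone_wedge k').
Proof.
  exists (proj1_sig h). intros x.
  change ((pi1 x ∘ cmor k') ∘ proj1_sig h = pi1 x ∘ cmor k).
  now rewrite <- comp_assoc, (proj2_sig h).
Defined.

Definition wedges_to_cones : Functor (WedgeCat F S) (ConeCat s t).
Proof.
  refine {| fob := wedge_cone; fmor := wedge_cone_mor |};
    intros; apply CHom_eq; reflexivity.
Defined.

Definition cones_to_wedges : Functor (ConeCat s t) (WedgeCat F S).
Proof.
  refine {| fob := cone_wedge; fmor := cone_wedge_mor |};
    intros; apply WHom_eq; reflexivity.
Defined.

Lemma cone_wedge_cone (w : WedgeCat F S) : cone_wedge (wedge_cone w) = w.
Proof.
  destruct w as [c [eta W]]. unfold cone_wedge. f_equal.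
  apply ProofIrrelevanceTheory.subset_eq_compat.
  exact (tuple_weta (existT _ c (exist _ eta W))).
Qed.

Lemma wedge_cone_wedge (k : ConeCat s t) : wedge_cone (cone_wedge k) = k.
Proof.
  destruct k as [c [e E]]. unfold wedge_cone. f_equal.
  apply ProofIrrelevanceTheory.subset_eq_compat.
  apply (product_ext HP1). intros x. now rewrite (tuple_proj HP1).
Qed.

Lemma wedges_to_cones_iso : IsIsoFunctor wedges_to_cones.
Proof.
  exists cones_to_wedges.
  split; [exact cone_wedge_cone|]. split; [exact wedge_cone_wedge|].
  split; intros.
  - apply WHom_HEq; [apply cone_wedge_cone .. | reflexivity].
  - apply CHom_HEq; [apply wedge_cone_wedge .. | reflexivity].
Qed.

Lemma end_iff_equalizer (w : WedgeCat F S) :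
  IsEnd w <-> IsEqualizer s t (cmor (wedges_to_cones w)).
Proof.
  rewrite <- cone_terminal_iff_equalizer.
  apply terminal_fully_faithful.
  - intros w1 w2 f f' E. apply WHom_eq. exact (f_equal (@proj1_sig _ _) E).
  - intros w1 w2 g.
    exists (exist _ (proj1_sig g) (proj2 (wedge_hom_iff w1 w2 _) (proj2_sig g))).
    now apply CHom_eq.
  - intros k. exists (cone_wedge k). apply wedge_cone_wedge.
Qed.

End WedgesAsCones.

Theorem mainTheorem4
  (A : Category) (V : Variance A) (C : Category) (F : VFunctor V C)
  (S : Span A)
  (* the product  prod_x F(Lx)  over the objects x of R *)
  (P1 : C) (pi1 : forall x : SR S, Hom P1 (F (SL S x)))
  (HP1 : IsProduct pi1)
  (* the product  prod_f F(L(f)_t)  over the morphisms f of R *)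
  (P2 : C)
  (pi2 : forall i : MorIdx (SR S), Hom P2 (F (vt V (fmor (SL S) (projT2 i)))))
  (HP2 : IsProduct pi2)
  (s t : Hom P1 P2)
  (* pi_f ∘ s = F(L(f)^e) ∘ pi_x  for every f : x -> y in R *)
  (Hs : forall (x y : SR S) (f : Hom x y),
      exists u : Hom (F (SL S x)) (F (vt V (fmor (SL S) f))),
        HEq u (vfmor F (up_e V (fmor (SL S) f))) /\
        pi2 (homT f) ∘ s = u ∘ pi1 x)
  (* pi_f ∘ t = F(L(f)^m) ∘ pi_y  for every f : x -> y in R *)
  (Ht : forall (x y : SR S) (f : Hom x y),
      exists v : Hom (F (SL S y)) (F (vt V (fmor (SL S) f))),
        HEq v (vfmor F (up_m V (fmor (SL S) f))) /\
        pi2 (homT f) ∘ t = v ∘ pi1 y) :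
  exists Phi : Functor (WedgeCat F S) (ConeCat s t),
    (* on objects: (c, eta) |-> (c, eta') with pi_x ∘ eta' = eta_x *)
    (forall (w : WedgeCat F S) (x : SR S),
        HEq (pi1 x ∘ cmor (Phi w)) (weta w x)) /\
    (* on morphisms: the identity on underlying morphisms of C *)
    (forall (w w' : WedgeCat F S) (h : Hom w w'),
        HEq (proj1_sig (fmor Phi h)) (proj1_sig h)) /\
    (* Phi is an isomorphism of categories *)
    IsIsoFunctor Phi /\
    (* in particular: the end exists iff the equalizer exists ... *)
    ((exists w : WedgeCat F S, IsEnd w) <->
     (exists (c : C) (e : Hom c P1), IsEqualizer s t e)) /\
    (* ... and they agree *)
    (forall w : WedgeCat F S, IsEnd w <-> IsEqualizer s t (cmor (Phi w))).
Proof.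
  pose (end_iff := end_iff_equalizer HP1 HP2 s t Hs Ht).
  exists (wedges_to_cones F S HP1 HP2 s t Hs Ht).
  split; [intros w x; exact (f_equal homT (tuple_proj HP1 (weta w) x))|].
  split; [reflexivity|].
  split; [apply wedges_to_cones_iso|].
  split; [|exact end_iff].
  split.
  - intros [w Hw]. eexists; eexists. apply end_iff, Hw.
  - intros [c [e He]].
    exists (cone_wedge F S pi1 HP2 Hs Ht (existT _ c (exist _ e (proj1 He)))).
    apply end_iff. cbn [fob wedges_to_cones].
    rewrite (wedge_cone_wedge F S HP1 HP2 Hs Ht). exact He.
Qed.
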